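(* Let $X$ be a real Banach space with a normalized Schauder basis $\mathcal B=(e_n)_{n=1}^\infty$ with biorthogonal functionals $(e_n^* )$, and let $\mathcal E=(\varepsilon_n)_{n=1}^\infty$ be a sequence of nonnegative numbers. Each of the following conditions is sufficient for the brick $K_{\mathcal B,\mathcal E}$ to be solid: (1) $\mathcal B$ is an unconditional basis; (2) $\sum_{n=1}^\infty\varepsilon_n<\infty$.
   Context: The brick is $K_{\mathcal B,\mathcal E}=\{x\in X:\ |e_n^*(x)|\le\varepsilon_n \text{ for all } n\}$. The brick is called solid if for each $x\in K_{\mathcal B,\mathcal E}$ and all scalars $a_1,a_2,\dots$ with $|a_n|\le|e_n^*(x)|$ for all $n$, the series $\sum_{n=1}^\infty a_ne_n$ converges. A basis is unconditional if $\sum_n e_n^*(x)e_n$ converges unconditionally (under every permutation) for every $x\in X$; normalized means $\|e_n\|=1$. *)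

(* Indices start at 0 (e_0, e_1, ...) instead of 1. *)
From HB Require Import structures.
From mathcomp Require Import all_boot all_order all_algebra.
From mathcomp Require Import all_classical all_reals all_analysis.
Set Implicit Arguments. Unset Strict Implicit. Unset Printing Implicit Defensive.
Import Order.TTheory GRing.Theory Num.Theory.
Import numFieldNormedType.Exports.
Local Open Scope classical_set_scope.
Local Open Scope ring_scope.

Section Defs.
Variables (R : realType) (X : normedModType R).

Definition schauder_basis (e : nat -> X) : Prop :=
  forall x : X, exists! a : nat -> R,
    series (fun n => a n *: e n) @ \oo --> x.

Definition normalized (e : nat -> X) : Prop := forall n, `|e n| = 1.

Definition biorthogonal_functionals (e : nat -> X) (estar : nat -> X -> R) : Prop :=
  (forall n, linear_for *%R (estar n) /\ continuous (estar n)) /\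
  (forall n m, estar n (e m) = if n == m then 1 else 0) /\
  (forall x : X, series (fun n => estar n x *: e n) @ \oo --> x).

Definition unconditional_basis (e : nat -> X) (estar : nat -> X -> R) : Prop :=
  forall x : X, forall s : nat -> nat, bijective s ->
    cvg (series (fun n => estar (s n) x *: e (s n)) @ \oo).

Definition brick (estar : nat -> X -> R) (eps : nat -> R) : set X :=
  [set x | forall n, `|estar n x| <= eps n].

Definition solid_brick (e : nat -> X) (estar : nat -> X -> R) (eps : nat -> R) : Prop :=
  forall x, brick estar eps x ->
  forall a : nat -> R, (forall n, `|a n| <= `|estar n x|) ->
    cvg (series (fun n => a n *: e n) @ \oo).
End Defs.

From HB Require Import structures.
From mathcomp Require Import all_boot all_order all_algebra.
From mathcomp Require Import all_classical all_reals all_analysis.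
From mathcomp Require Import lra.
Import Order.TTheory GRing.Theory Num.Theory.
Import numFieldNormedType.Exports.
Local Open Scope classical_set_scope.
Local Open Scope ring_scope.

(* If [sum e_n^*(x) e_n] converges under every rearrangement, its tails are
   uniformly small over arbitrary subsets of indices: otherwise one chooses
   disjoint consecutive blocks carrying large subsums and a rearrangement
   listing each such subset contiguously, which is not Cauchy.  A sum
   [sum t_n e_n^*(x) e_n] with [|t_n| <= 1] is then a convex combination of
   such subset sums, so it is Cauchy too.  If [sum eps_n] converges, the
   series [sum a_n e_n] converges absolutely since [|a_n| <= eps_n]. *)

Lemma near_oo2P (P : nat -> nat -> Prop) :
  (\forall n \near (\oo, \oo), P n.1 n.2) <->
  exists N, forall m k, (N <= m)%N -> (N <= k)%N -> P m k.
Proof.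
split=> [[[A B] /= [[N1 _ A_N1] [N2 _ B_N2]] AB_P] | [N N_P]].
  exists (maxn N1 N2) => m k Nm Nk; apply: (AB_P (m, k)); split.
    by apply: A_N1; rewrite /= (leq_trans (leq_maxl _ _) Nm).
  by apply: B_N2; rewrite /= (leq_trans (leq_maxr _ _) Nk).
exists ([set n | (N <= n)%N], [set n | (N <= n)%N]); first by split; exists N.
by move=> [m k] [/= Nm Nk]; apply: N_P.
Qed.

Section BlockRearrangement.
Variables (c : nat -> nat) (Q : nat -> pred nat).
Hypotheses (c0 : c 0 = 0%N) (c_lt : forall j, (c j < c j.+1)%N).

Definition block j := index_iota (c j) (c j.+1).

Definition block_arrangement j :=
  seq.filter (Q j) (block j) ++ seq.filter (predC (Q j)) (block j).

Fixpoint arrangement J :=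
  if J is J'.+1 then arrangement J' ++ block_arrangement J' else [::].

Lemma perm_arrangement J : perm_eq (arrangement J) (iota 0 (c J)).
Proof.
elim: J => [|J IH] /=; first by rewrite c0.
have -> : iota 0 (c J.+1) = iota 0 (c J) ++ block J.
  by rewrite /block /index_iota -{1}(subnKC (ltnW (c_lt J))) iotaD.
by apply: perm_cat; rewrite // perm_filterC.
Qed.

Lemma size_arrangement J : size (arrangement J) = c J.
Proof. by rewrite (perm_size (perm_arrangement J)) size_iota. Qed.

Lemma uniq_arrangement J : uniq (arrangement J).
Proof. by rewrite (perm_uniq (perm_arrangement J)) iota_uniq. Qed.

Lemma mem_arrangement J q : (q \in arrangement J) = (q < c J)%N.
Proof. by rewrite (perm_mem (perm_arrangement J)) mem_iota. Qed.

Lemma arrangement_cat j J :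
  (j <= J)%N -> exists r, arrangement J = arrangement j ++ r.
Proof.
move=> /subnKC <-; elim: (J - j)%N => [|k [r IH]].
  by exists [::]; rewrite addn0 cats0.
by rewrite addnS /= IH; exists (r ++ block_arrangement (j + k)); rewrite catA.
Qed.

Lemma nth_arrangement j J p : (j <= J)%N -> (p < c j)%N ->
  nth 0%N (arrangement J) p = nth 0%N (arrangement j) p.
Proof. by move=> /arrangement_cat [r ->] pc; rewrite nth_cat size_arrangement pc. Qed.

Lemma leq_c j : (j <= c j)%N.
Proof. by elim: j => [|j IH] //; apply: leq_ltn_trans IH (c_lt j). Qed.

Lemma homo_c : {homo c : j J / (j <= J)%N}.
Proof. exact: homo_leq leqnn leq_trans (fun j => ltnW (c_lt j)). Qed.

(* The limit of the arrangements: [arrangement J] lists [rearrange] on [0, c J). *)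
Definition rearrange p := nth 0%N (arrangement p.+1) p.

Lemma rearrangeE J p : (p < c J)%N -> rearrange p = nth 0%N (arrangement J) p.
Proof.
move=> pc; have pc1 : (p < c p.+1)%N by apply: leq_trans (leq_c _).
rewrite /rearrange -(@nth_arrangement p.+1 (maxn p.+1 J)) ?leq_maxl //.
by rewrite (@nth_arrangement J) ?leq_maxr.
Qed.

Lemma bijective_rearrange : bijective rearrange.
Proof.
exists (fun q => index q (arrangement q.+1)) => [p|q].
  set q := rearrange p; set J := maxn p.+1 q.+1.
  have pc : (p < c J)%N.
    exact: leq_trans (leq_c p.+1) (homo_c _ _ (leq_maxl p.+1 q.+1)).
  have [r Er] := @arrangement_cat q.+1 J (leq_maxr _ _).
  have q_in : q \in arrangement q.+1 by rewrite mem_arrangement (leq_c _).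
  have -> : p = index q (arrangement J).
    by rewrite /q (rearrangeE _ _ pc) index_uniq ?size_arrangement ?uniq_arrangement.
  by rewrite Er (index_cat q (arrangement q.+1)) q_in.
have q_in : q \in arrangement q.+1 by rewrite mem_arrangement (leq_c _).
have ic : (index q (arrangement q.+1) < c q.+1)%N.
  by rewrite -size_arrangement index_mem.
by rewrite (rearrangeE _ _ ic) nth_index.
Qed.

Lemma map_rearrange_iota J n : (n <= c J)%N ->
  map rearrange (iota 0 n) = take n (arrangement J).
Proof.
move=> nc; apply: (@eq_from_nth _ 0%N).
  by rewrite size_map size_iota size_take size_arrangement; case: ltngtP nc.
move=> i; rewrite size_map size_iota => ilt.
rewrite (nth_map 0%N) ?size_iota // nth_iota // nth_take //.
by apply: rearrangeE; apply: leq_trans nc.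
Qed.

Lemma sum_rearrange_block (V : zmodType) (y : nat -> V) J :
  \sum_(c J <= k < c J + size (seq.filter (Q J) (block J))) y (rearrange k) =
  \sum_(c J <= i < c J.+1 | Q J i) y i.
Proof.
set F := seq.filter (Q J) (block J).
have sF : (c J + size F <= c J.+1)%N.
  rewrite -leq_subRL ?(ltnW (c_lt J)) // /F size_filter.
  by rewrite (leq_trans (count_size _ _)) // size_iota.
have sum_take n JJ : (n <= c JJ)%N ->
    \sum_(0 <= k < n) y (rearrange k) = \sum_(i <- take n (arrangement JJ)) y i.
  by move=> nc; rewrite /index_iota subn0 -(map_rearrange_iota _ _ nc) big_map.
have head := sum_take _ J (leqnn _).
rewrite take_oversize ?size_arrangement // in head.
have := sum_take _ J.+1 sF.
rewrite /= take_cat size_arrangement ltnNge leq_addr /= addKn.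
rewrite /block_arrangement take_size_cat //.
rewrite (big_cat_nat (leq0n (c J)) (leq_addr _ _)) /= head big_cat /= big_filter.
exact: addrI.
Qed.

End BlockRearrangement.

Section Subsums.
Context {R : realFieldType} {V : normedModType R}.

Lemma norm_weighted_sum_le_mask (y : nat -> V) (t : nat -> R) (eps : R)
    (s : seq nat) (z : V) :
  (forall i, 0 <= t i <= 1) ->
  (forall m : bitseq, `|z + \sum_(i <- mask m s) y i| <= eps) ->
  `|z + \sum_(i <- s) t i *: y i| <= eps.
Proof.
move=> t01; elim: s z => [|a s IH] z mask_le.
  by have := mask_le [::]; rewrite !big_nil.
have le_without : `|z + \sum_(i <- s) t i *: y i| <= eps.
  by apply: IH => m; have := mask_le (false :: m).
have le_with : `|(z + y a) + \sum_(i <- s) t i *: y i| <= eps.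
  by apply: IH => m; have := mask_le (true :: m); rewrite /= big_cons addrA.
have /andP[ta_ge0 ta_le1] := t01 a.
set u := z + _ in le_without; set v := _ + _ in le_with.
have -> : z + \sum_(i <- a :: s) t i *: y i = (1 - t a) *: u + t a *: v.
  rewrite big_cons /u /v scalerBl scale1r !scalerDr -!addrA; congr (_ + _).
  by rewrite [t a *: z + (_ + _)]addrCA [- _ + _]addrCA addNr addr0 addrC.
apply: le_trans (ler_normD _ _) _.
rewrite !normrZ (ger0_norm ta_ge0) ger0_norm ?subr_ge0 //.
apply: le_trans (lerD (ler_wpM2l _ le_without) (ler_wpM2l ta_ge0 le_with)) _.
  by rewrite subr_ge0.
by rewrite -mulrDl subrK mul1r.
Qed.

(* Write [t = 2 w - 1] with weights [w = (1 + t) / 2] in [[0, 1]]. *)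
Lemma norm_weighted_subsum_le (y : nat -> V) (t : nat -> R) (eps : R) (m k : nat) :
  (forall P : pred nat, `|\sum_(m <= i < k | P i) y i| <= eps) ->
  (forall i, `|t i| <= 1) ->
  `|\sum_(m <= i < k) t i *: y i| <= 3 * eps.
Proof.
move=> subsum_le t_le1; pose w i := (1 + t i) / 2.
have w01 i : 0 <= w i <= 1 by move: (t_le1 i); rewrite ler_norml /w; lra.
have weighted_le (u : nat -> R) : (forall i, 0 <= u i <= 1) ->
    `|\sum_(m <= i < k) u i *: y i| <= eps.
  move=> u01; rewrite -[X in `|X|]add0r; apply: norm_weighted_sum_le_mask => // msk.
  by rewrite add0r mask_filter ?iota_uniq // big_filter.
have -> : \sum_(m <= i < k) t i *: y i =
    2 *: \sum_(m <= i < k) w i *: y i - \sum_(m <= i < k) y i.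
  rewrite scaler_sumr -sumrB; apply: eq_bigr => i _.
  by rewrite scalerA /w mulrCA divff ?pnatr_eq0 // mulr1 scalerDl scale1r addrC addKr.
apply: le_trans (ler_normB _ _) _; rewrite normrZ ger0_norm //.
have := weighted_le _ w01; have := subsum_le predT; lra.
Qed.

Lemma rearrangement_cvg_subsum_small (y : nat -> V) :
  (forall s, bijective s -> cvg (series (fun n => y (s n)) @ \oo)) ->
  forall eps : R, 0 < eps -> exists N, forall m k (P : pred nat), (N <= m)%N ->
    `|\sum_(m <= i < k | P i) y i| <= eps.
Proof.
move=> y_uncond eps eps_gt0; apply: contrapT => no_N.
have bad N : exists mkP : nat * nat * pred nat, (N <= mkP.1.1)%N /\
    eps < `|\sum_(mkP.1.1 <= i < mkP.1.2 | mkP.2 i) y i|.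
  apply: contrapT => no_bad; apply: no_N; exists N => m k P Nm.
  by rewrite leNgt; apply/negP => lt; apply: no_bad; exists (m, k, P).
have [g g_bad] := choice bad.
pose c := fix c j := if j is j'.+1 then maxn (g (c j')).1.2 (c j').+1 else 0%N.
pose Q j i := ((g (c j)).2 i && ((g (c j)).1.1 <= i)%N) && (i < (g (c j)).1.2)%N.
have c_lt j : (c j < c j.+1)%N by rewrite /= leq_maxr.
have block_large j : eps < `|\sum_(c j <= i < c j.+1 | Q j i) y i|.
  have [cj_le lt_sum] := g_bad (c j).
  have le_cj1 : ((g (c j)).1.2 <= c j.+1)%N by rewrite /= leq_maxl.
  by rewrite (big_nat_widenl _ _ _ _ _ cj_le) (big_nat_widen _ _ _ _ _ le_cj1) in lt_sum.
pose rearrange_small m k := `|\sum_(m <= i < k) y (rearrange c Q i)| < eps.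
have := y_uncond _ (@bijective_rearrange c Q erefl c_lt).
move=> /cvg_cauchy/cauchy_seriesP/(_ eps eps_gt0)/(near_oo2P rearrange_small).
move=> [N cauchyN].
have Nc : (N <= c N)%N by apply: leq_c.
have := cauchyN _ (c N + size (seq.filter (Q N) (block c N)))%N Nc
  (leq_trans Nc (leq_addr _ _)).
rewrite /rearrange_small sum_rearrange_block //.
by move=> /(lt_trans (block_large N)); rewrite ltxx.
Qed.

End Subsums.

Lemma unconditional_dominated_cvg {R : realType} {X : completeNormedModType R}
    (e : nat -> X) (estar : nat -> X -> R) :
  unconditional_basis e estar -> forall (x : X) (a : nat -> R),
  (forall n, `|a n| <= `|estar n x|) -> cvg (series (fun n => a n *: e n) @ \oo).
Proof.
move=> uncond x a a_le; pose y n := estar n x *: e n.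
(* [t n = 0] when [estar n x = 0], as [0^-1 = 0]. *)
pose t n := a n / estar n x.
have a_eq n : a n *: e n = t n *: y n.
  rewrite /t /y scalerA; have [ez|nz] := eqVneq (estar n x) 0; last by rewrite divfK.
  by move: (a_le n); rewrite ez normr0 normr_le0 => /eqP ->; rewrite mulr0.
have t_le1 n : `|t n| <= 1.
  rewrite /t normrM normfV; have [->|nz] := eqVneq (estar n x) 0.
    by rewrite normr0 invr0 mulr0.
  by rewrite ler_pdivrMr ?normr_gt0 // mul1r.
apply/cauchy_cvgP/cauchy_seriesP => eps eps_gt0.
have eps4_gt0 : 0 < eps / 4 by rewrite divr_gt0.
have [N subsum_small] := @rearrangement_cvg_subsum_small _ _ y (uncond x) _ eps4_gt0.
apply/(near_oo2P (fun m k => `|\sum_(m <= i < k) a i *: e i| < eps)).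
exists N => m k Nm _; rewrite (eq_bigr _ (fun n _ => a_eq n)).
apply: (@le_lt_trans _ _ (3 * (eps / 4))); last lra.
by apply: norm_weighted_subsum_le => // P; apply: subsum_small.
Qed.

Lemma solid_brick_summable {R : realType} {X : completeNormedModType R}
    (e : nat -> X) (estar : nat -> X -> R) (eps : nat -> R) :
  normalized e -> (forall n, 0 <= eps n) -> cvg (series eps @ \oo) ->
  solid_brick e estar eps.
Proof.
move=> e_norm eps_ge0 eps_cvg x x_brick a a_le; apply: normed_cvg.
apply: (series_le_cvg _ eps_ge0 _ eps_cvg) => n //=.
by rewrite normrZ e_norm mulr1 (le_trans (a_le n) (x_brick n)).
Qed.

Theorem proposition2p5 (R : realType) (X : completeNormedModType R)
  (e : nat -> X) (estar : nat -> X -> R) (eps : nat -> R) :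
  schauder_basis e -> normalized e -> biorthogonal_functionals e estar ->
  (forall n, 0 <= eps n) ->
  (unconditional_basis e estar -> solid_brick e estar eps) /\
  (cvg (series eps @ \oo) -> solid_brick e estar eps).
Proof.
move=> _ e_norm _ eps_ge0; split; last exact: solid_brick_summable.
by move=> uncond x _; apply: unconditional_dominated_cvg.
Qed.
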